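(* Let $\mathbb{X}$ be a finite-dimensional real Euclidean space and let $\boldsymbol{M}_1,\boldsymbol{M}_2:\mathbb{X}\rightrightarrows\mathbb{X}$ be such that $\boldsymbol{M}_1$, $\boldsymbol{M}_2$ and $\boldsymbol{M}_1+\boldsymbol{M}_2$ are maximal monotone and $\operatorname{Zer}(\boldsymbol{M}_1+\boldsymbol{M}_2)\neq\emptyset$. Let $\sigma>0$, $\eta^0\in\mathbb{X}$, and let $\{w^k,x^k,v^k,\eta^k\}_{k\ge1}$ be generated by the HPR iteration: for $k\ge0$, $w^{k+1}=\boldsymbol{J}_{\sigma\boldsymbol{M}_2}(\eta^k)$, $x^{k+1}=\boldsymbol{J}_{\sigma\boldsymbol{M}_1}(2w^{k+1}-\eta^k)$, $v^{k+1}=2x^{k+1}-(2w^{k+1}-\eta^k)$, $\eta^{k+1}=\frac{1}{k+2}\eta^0+\frac{k+1}{k+2}v^{k+1}$. Let $\eta^*:=\Pi_{\operatorname{Fix}(\mathbf{T}^{\rm PR}_\sigma)}(\eta^0)$ and $w^*:=\boldsymbol{J}_{\sigma\boldsymbol{M}_2}(\eta^* )$. Then $\eta^k\to\eta^*$, $v^k\to\eta^*$, $x^k\to w^*$, $w^k\to w^*$, and $w^*\in\operatorname{Zer}(\boldsymbol{M}_1+\boldsymbol{M}_2)$, i.e. $0\in\boldsymbol{M}_1w^*+\boldsymbol{M}_2w^*$.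
   Context: For a maximal monotone $\boldsymbol{M}$, $\boldsymbol{J}_{\boldsymbol{M}}:=(\boldsymbol{I}+\boldsymbol{M})^{-1}$ is its resolvent and $\boldsymbol{R}_{\boldsymbol{M}}:=2\boldsymbol{J}_{\boldsymbol{M}}-\boldsymbol{I}$ its reflected resolvent. The Peaceman–Rachford operator is $\mathbf{T}^{\rm PR}_\sigma:=\boldsymbol{R}_{\sigma\boldsymbol{M}_1}\circ\boldsymbol{R}_{\sigma\boldsymbol{M}_2}$, $\operatorname{Fix}(\cdot)$ is the set of fixed points, and $\Pi_C$ is the Euclidean projection onto a closed convex set $C$. *)

From HB Require Import structures.
From mathcomp Require Import all_boot all_order all_algebra.
From mathcomp Require Import all_classical all_reals all_analysis.
Set Implicit Arguments. Unset Strict Implicit. Unset Printing Implicit Defensive.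
Import Order.TTheory GRing.Theory Num.Theory.
Local Open Scope classical_set_scope.
Local Open Scope ring_scope.

(* The Euclidean space X is modelled as 'rV[R]_n with the standard inner product. *)
Definition dotv (R : realType) (n : nat) (u v : 'rV[R]_n) : R := (u *m v^T) 0 0.

Definition setop (R : realType) (n : nat) := 'rV[R]_n -> set 'rV[R]_n.

Definition monotone_op (R : realType) (n : nat) (M : setop R n) : Prop :=
  forall x y u v, M x u -> M y v -> 0 <= dotv (x - y) (u - v).

Definition maximal_monotone (R : realType) (n : nat) (M : setop R n) : Prop :=
  monotone_op M /\
  forall M' : setop R n, monotone_op M' -> (forall x u, M x u -> M' x u) ->
    forall x u, M' x u -> M x u.

Definition sum_op (R : realType) (n : nat) (M1 M2 : setop R n) : setop R n :=
  fun x => [set a + b | a in M1 x & b in M2 x].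

Definition scale_op (R : realType) (n : nat) (s : R) (M : setop R n) : setop R n :=
  fun x => [set s *: u | u in M x].

Definition zer (R : realType) (n : nat) (M : setop R n) : set 'rV[R]_n :=
  [set x | M x 0].

(* resolvent J_M := (I + M)^{-1}, as a set-valued operator *)
Definition resolvent (R : realType) (n : nat) (M : setop R n) : setop R n :=
  fun x => [set y | exists2 u, M y u & x = y + u].

Definition refl_resolvent (R : realType) (n : nat) (M : setop R n) : setop R n :=
  fun x => [set 2%:R *: y - x | y in resolvent M x].

Definition comp_op (R : realType) (n : nat) (A B : setop R n) : setop R n :=
  fun x => \bigcup_(y in B x) A y.

Definition T_PR (R : realType) (n : nat) (s : R) (M1 M2 : setop R n) : setop R n :=
  comp_op (refl_resolvent (scale_op s M1)) (refl_resolvent (scale_op s M2)).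

Definition Fix_op (R : realType) (n : nat) (T : setop R n) : set 'rV[R]_n :=
  [set x | T x x].

Definition is_proj (R : realType) (n : nat) (C : set 'rV[R]_n) (z p : 'rV[R]_n) : Prop :=
  C p /\ forall c, C c -> dotv (z - p) (z - p) <= dotv (z - c) (z - c).

From HB Require Import structures.
From mathcomp Require Import all_boot all_order all_algebra.
From mathcomp Require Import all_classical all_reals all_analysis.
From mathcomp Require Import ring lra.
Import Order.TTheory GRing.Theory Num.Theory.
Import numFieldNormedType.Exports.
Local Open Scope classical_set_scope.
Local Open Scope ring_scope.

(* The HPR scheme is the Halpern iteration
   [eta^(k+1) = lam_k eta^0 + (1 - lam_k) T eta^k], [lam_k = 1/(k+2)], for the
   nonexpansive Peaceman-Rachford operator [T].  The fixed points of [T] are the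
   points [z + sigma b] with [b] in [M2 z] and [-b] in [M1 z]; maximality makes this
   set convex and the graphs of [M1], [M2] closed, so that any cluster point of the
   [eta^k] along which [eta^k - T eta^k -> 0] is a fixed point.  Both
   [|eta^(k+2) - eta^(k+1)|^2] and [|eta^k - eta^*|^2] obey a recursion
   [a_(k+1) <= (1 - lam_k) a_k + lam_k d_k] with [limsup d_k <= 0] (for the second
   one by the variational inequality of the projection [eta^*]), hence vanish.
   Finally [w^* = J_(sigma M2) eta^*] is a zero of [M1 + M2] because [eta^*] is a
   fixed point. *)

Set Implicit Arguments. Unset Strict Implicit.

Section Dotv.
Variables (R : realType) (n : nat).
Implicit Types (u v w : 'rV[R]_n) (a : R).

Lemma dotvE u v : dotv u v = \sum_i u 0 i * v 0 i.
Proof. by rewrite /dotv !mxE; apply: eq_bigr => i _; rewrite mxE. Qed.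

Lemma dotvC u v : dotv u v = dotv v u.
Proof. by rewrite !dotvE; apply: eq_bigr => i _; rewrite mulrC. Qed.

Lemma dotvDl u v w : dotv (u + v) w = dotv u w + dotv v w.
Proof. by rewrite !dotvE -big_split; apply: eq_bigr => i _; rewrite mxE mulrDl. Qed.

Lemma dotvDr u v w : dotv w (u + v) = dotv w u + dotv w v.
Proof. by rewrite dotvC dotvDl !(dotvC w). Qed.

Lemma dotvZl a u v : dotv (a *: u) v = a * dotv u v.
Proof. by rewrite !dotvE mulr_sumr; apply: eq_bigr => i _; rewrite mxE mulrA. Qed.

Lemma dotvZr a u v : dotv v (a *: u) = a * dotv v u.
Proof. by rewrite dotvC dotvZl dotvC. Qed.

Lemma dotvNl u v : dotv (- u) v = - dotv u v.
Proof. by rewrite -scaleN1r dotvZl mulN1r. Qed.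

Lemma dotvNr u v : dotv v (- u) = - dotv v u.
Proof. by rewrite dotvC dotvNl dotvC. Qed.

Lemma dotvNN u v : dotv (- u) (- v) = dotv u v.
Proof. by rewrite dotvNl dotvNr opprK. Qed.

Lemma dotv0l v : dotv 0 v = 0.
Proof. by rewrite dotvE big1 // => i _; rewrite mxE mul0r. Qed.

Lemma dotv_ge0 u : 0 <= dotv u u.
Proof. by rewrite dotvE; apply: sumr_ge0 => i _; rewrite -expr2 sqr_ge0. Qed.

Lemma dotv_le0_eq0 u : dotv u u <= 0 -> u = 0.
Proof.
move=> u0; apply/rowP => i; rewrite mxE; apply/eqP; rewrite -sqrf_eq0 expr2.
have /eqP : dotv u u = 0 by apply/eqP; rewrite eq_le u0 dotv_ge0.
rewrite dotvE psumr_eq0 => [/allP/(_ i (mem_index_enum _))//|j _].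
by rewrite -expr2 sqr_ge0.
Qed.

Lemma sqr_normr_le_dotv u : `|u| ^+ 2 <= dotv u u.
Proof.
change (mx_norm u ^+ 2 <= dotv u u).
have [->|/mx_norm_neq0 [[i j] /= ->]] := eqVneq (mx_norm u) 0.
  by rewrite expr0n /= dotv_ge0.
rewrite (ord1 i) dotvE (bigD1 j) //= real_normK ?num_real //.
by rewrite expr2 lerDl; apply: sumr_ge0 => k _; rewrite -expr2 sqr_ge0.
Qed.

Lemma normr_le_dotvB u c B : dotv (u - c) (u - c) <= B -> `|u| <= `|c| + (1 + B).
Proof.
move=> ucB; rewrite -(subrK c u) addrC; apply: le_trans (ler_normD _ _) _.
rewrite lerD2l; have := sqr_normr_le_dotv (u - c); have := normr_ge0 (u - c).
move: (`|u - c|) ucB => t ucB t0; nra.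
Qed.

Lemma cvg0_dotv_le {T} (F : set_system T) {FF : Filter F} (f : T -> 'rV[R]_n) g :
  (\forall t \near F, dotv (f t) (f t) <= g t) -> g @ F --> (0 : R) ->
  f @ F --> (0 : 'rV[R]_n).
Proof.
move=> fg g0; have f0 : dotv (f t) (f t) @[t --> F] --> (0 : R).
  apply: (squeeze_cvgr _ (cvg_cst 0) g0).
  by apply: filterS fg => t ->; rewrite dotv_ge0.
apply/cvgr0Pnorm_lt => e e0.
near=> t; have : `|dotv (f t) (f t)| < e ^+ 2.
  by near: t; exact: (cvgr0_norm_lt _ f0 _ (exprn_gt0 2 e0)).
rewrite ger0_norm ?dotv_ge0 // => lt_e; rewrite -(@ltr_pXn2r _ 2) ?nnegrE ?(ltW e0) //.
exact: le_lt_trans (sqr_normr_le_dotv _) lt_e.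
Unshelve. all: by end_near. Qed.

Lemma cvg_dotv {T} (F : set_system T) {FF : Filter F} (f g : T -> 'rV[R]_n) u v :
  f @ F --> u -> g @ F --> v -> dotv (f t) (g t) @[t --> F] --> dotv u v.
Proof.
move=> fu gv; rewrite dotvE; under eq_cvg do rewrite dotvE.
apply: cvg_big => // [|i _]; first exact: add_continuous.
apply: cvgM; first exact: (cvg_comp f _ fu (@coord_continuous _ _ _ 0 i u)).
exact: (cvg_comp g _ gv (@coord_continuous _ _ _ 0 i v)).
Qed.

Lemma dotv_convex_comb t u0 u1 v0 v1 :
  dotv ((1 - t) *: u0 + t *: u1) ((1 - t) *: v0 + t *: v1) =
  (1 - t) * dotv u0 v0 + t * dotv u1 v1 - t * (1 - t) * dotv (u0 - u1) (v0 - v1).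
Proof. by rewrite !(dotvDl, dotvDr, dotvZl, dotvZr, dotvNl, dotvNr); ring. Qed.

Lemma dotv_convex a b u v : 0 <= a -> 0 <= b -> a + b = 1 ->
  dotv (a *: u + b *: v) (a *: u + b *: v) <= a * dotv u u + b * dotv v v.
Proof.
move=> a0 b0 ab1; have := dotv_ge0 (u - v); have := mulr_ge0 a0 b0.
rewrite !(dotvDl, dotvDr, dotvNl, dotvNr, dotvZl, dotvZr) (dotvC v u).
have -> : b = 1 - a by lra.
nra.
Qed.

Lemma dotv_anchorE t u v :
  dotv (t *: u + (1 - t) *: v) (t *: u + (1 - t) *: v) =
  (1 - t) ^+ 2 * dotv v v + 2 * t * dotv u (t *: u + (1 - t) *: v) - t ^+ 2 * dotv u u.
Proof. by rewrite !(dotvDl, dotvDr, dotvZl, dotvZr) (dotvC v u); ring. Qed.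

Lemma dotv_sqD_le u v : dotv (u + v) (u + v) <= 2 * dotv u u + 2 * dotv v v.
Proof.
have := dotv_ge0 (u - v).
rewrite !(dotvDl, dotvDr, dotvNl, dotvNr) (dotvC v u); lra.
Qed.

End Dotv.

Ltac vec_eq := apply/rowP => ?; rewrite !mxE; ring.

Section Monotone.
Variables (R : realType) (n : nat).
Implicit Types (M : setop R n) (x y z b u : 'rV[R]_n) (s t : R).

Lemma maximal_monotone_mem M z b : maximal_monotone M ->
  (forall x u, M x u -> 0 <= dotv (z - x) (b - u)) -> M z b.
Proof.
move=> [mono maxM] zb_mono.
pose M' x u := M x u \/ (x = z /\ u = b).
apply: (maxM M') => [x y u v [Mxu|[-> ->]] [Myv|[-> ->]]| x u Mxu|]; rewrite /M'.
- exact: mono.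
- by rewrite -dotvNN !opprB; apply: zb_mono.
- exact: zb_mono.
- by rewrite !subrr dotv0l.
- by left.
- by right.
Qed.

Lemma maximal_monotone_segment M t z0 b0 z1 b1 : maximal_monotone M ->
  0 <= t <= 1 -> M z0 b0 -> M z1 b1 -> dotv (z0 - z1) (b0 - b1) <= 0 ->
  M ((1 - t) *: z0 + t *: z1) ((1 - t) *: b0 + t *: b1).
Proof.
move=> hM /andP[t0 t1] Mzb0 Mzb1 cross; apply: maximal_monotone_mem => // x u Mxu.
have -> : (1 - t) *: z0 + t *: z1 - x = (1 - t) *: (z0 - x) + t *: (z1 - x) by vec_eq.
have -> : (1 - t) *: b0 + t *: b1 - u = (1 - t) *: (b0 - u) + t *: (b1 - u) by vec_eq.
rewrite dotv_convex_comb.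
have -> : z0 - x - (z1 - x) = z0 - z1 by vec_eq.
have -> : b0 - u - (b1 - u) = b0 - b1 by vec_eq.
have := hM.1 _ _ _ _ Mzb0 Mxu; have := hM.1 _ _ _ _ Mzb1 Mxu.
have : 0 <= t * (1 - t) by rewrite mulr_ge0 // subr_ge0.
nra.
Qed.

Lemma maximal_monotone_closed {T} (F : set_system T) {FF : ProperFilter F}
    M (f g : T -> 'rV[R]_n) y u :
  maximal_monotone M -> (\forall t \near F, M (f t) (g t)) ->
  f @ F --> y -> g @ F --> u -> M y u.
Proof.
move=> hM Mfg fy gu; apply: maximal_monotone_mem => // x v Mxv.
have lim_dotv : dotv (f t - x) (g t - v) @[t --> F] --> dotv (y - x) (u - v).
  by apply: cvg_dotv; apply: cvgB => //; exact: cvg_cst.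
have mono_near : \forall t \near F, 0 <= dotv (f t - x) (g t - v).
  by apply: filterS Mfg => t Mt; exact: hM.1.
exact: (closed_cvg _ (@closed_ge R 0) mono_near _ lim_dotv).
Qed.

Lemma resolvent_scaleP s M x y :
  resolvent (scale_op s M) x y <-> exists2 b, M y b & x = y + s *: b.
Proof.
split=> [[_ [b Mb <-] ->]|[b Mb ->]]; first by exists b.
by exists (s *: b) => //; exists b.
Qed.

Lemma resolvent_scale_graph s M x y : s != 0 ->
  resolvent (scale_op s M) x y -> M y (s^-1 *: (x - y)).
Proof.
by move=> s0 /resolvent_scaleP[b Mb ->]; rewrite addrC addKr scalerA mulVf ?scale1r.
Qed.

Lemma resolvent_nonexpansive s M x x' y y' : monotone_op M -> 0 <= s ->
  resolvent (scale_op s M) x y -> resolvent (scale_op s M) x' y' ->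
  dotv (y - y') (y - y') <= dotv (x - x') (x - x') /\
  dotv ((2%:R *: y - x) - (2%:R *: y' - x')) ((2%:R *: y - x) - (2%:R *: y' - x'))
    <= dotv (x - x') (x - x').
Proof.
move=> mono s0 /resolvent_scaleP[b Mb ->] /resolvent_scaleP[b' Mb' ->].
have := mono _ _ _ _ Mb Mb'.
have -> : y + s *: b - (y' + s *: b') = (y - y') + s *: (b - b') by vec_eq.
have -> : 2%:R *: y - (y + s *: b) - (2%:R *: y' - (y' + s *: b')) =
  (y - y') - s *: (b - b') by vec_eq.
move: (y - y') (b - b') => dy db.
have := dotv_ge0 dy; have := dotv_ge0 db.
rewrite !(dotvDl, dotvDr, dotvNl, dotvNr, dotvZl, dotvZr) (dotvC db dy); split; nra.
Qed.

Lemma resolvent_uniq s M x y y' : monotone_op M -> 0 <= s ->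
  resolvent (scale_op s M) x y -> resolvent (scale_op s M) x y' -> y = y'.
Proof.
move=> mono s0 Jy Jy'; have [+ _] := resolvent_nonexpansive mono s0 Jy Jy'.
by rewrite subrr dotv0l => /dotv_le0_eq0/eqP; rewrite subr_eq0 => /eqP.
Qed.

End Monotone.

Lemma is_proj_ineq (R : realType) (n : nat) (C : set 'rV[R]_n) (z p q : 'rV[R]_n) :
  (forall q0 q1 t, 0 <= t <= 1 -> C q0 -> C q1 -> C ((1 - t) *: q0 + t *: q1)) ->
  is_proj C z p -> C q -> dotv (z - p) (q - p) <= 0.
Proof.
move=> convC [Cp pmin] Cq.
have near_p t : 0 <= t <= 1 ->
    dotv (z - p) (z - p) <= dotv ((z - p) - t *: (q - p)) ((z - p) - t *: (q - p)).
  move=> t01; have := pmin _ (convC _ _ _ t01 Cp Cq).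
  by have -> : z - ((1 - t) *: p + t *: q) = (z - p) - t *: (q - p) by vec_eq.
move: near_p; move: (z - p) (q - p) => P Q near_p.
rewrite leNgt; apply/negP => PQ_gt0; have QQ_ge0 := dotv_ge0 Q.
(* if [<P, Q> > 0], moving from [p] towards [q] by this [t] gets strictly closer to [z] *)
pose t := dotv P Q / (dotv P Q + dotv Q Q).
have PQQ_gt0 : 0 < dotv P Q + dotv Q Q by rewrite ltr_wpDr.
have tE : t * (dotv P Q + dotv Q Q) = dotv P Q by rewrite mulfVK ?gt_eqF.
have t_gt0 : 0 < t by rewrite divr_gt0.
have t_le1 : t <= 1 by rewrite ler_pdivrMr ?mul1r ?lerDl.
have := near_p t; rewrite ltW ?t_le1 //= => /(_ isT).
rewrite !(dotvDl, dotvDr, dotvNl, dotvNr, dotvZl, dotvZr) (dotvC Q P); nra.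
Qed.

Section PeacemanRachford.
Variables (R : realType) (n : nat) (s : R) (M1 M2 : setop R n).
Hypotheses (s_gt0 : 0 < s) (hM1 : maximal_monotone M1) (hM2 : maximal_monotone M2).
Implicit Types (a c q z b : 'rV[R]_n).

Lemma T_PRP a c : T_PR s M1 M2 a c <-> exists w x,
  [/\ resolvent (scale_op s M2) a w, resolvent (scale_op s M1) (2%:R *: w - a) x
    & c = 2%:R *: x - (2%:R *: w - a)].
Proof.
split=> [[_ [w Jw <-] [x Jx <-]]|[w [x [Jw Jx ->]]]]; first by exists w, x.
by exists (2%:R *: w - a); [exists w | exists x].
Qed.

Lemma T_PR_nonexpansive a a' c c' : T_PR s M1 M2 a c -> T_PR s M1 M2 a' c' ->
  dotv (c - c') (c - c') <= dotv (a - a') (a - a').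
Proof.
move=> /T_PRP[w [x [Jw Jx ->]]] /T_PRP[w' [x' [Jw' Jx' ->]]].
have [_ le2] := resolvent_nonexpansive hM2.1 (ltW s_gt0) Jw Jw'.
have [_ le1] := resolvent_nonexpansive hM1.1 (ltW s_gt0) Jx Jx'.
exact: le_trans le1 le2.
Qed.

Lemma Fix_T_PRP q : Fix_op (T_PR s M1 M2) q <->
  exists z b, [/\ M2 z b, M1 z (- b) & q = z + s *: b].
Proof.
split=> [/T_PRP[w [x [/resolvent_scaleP[b Mb qE] /resolvent_scaleP[a Ma wE] q_fix]]]|].
  have [xw ab] : x = w /\ a = - b.
    suff coordE i : x 0 i = w 0 i /\ s * (a 0 i + b 0 i) = 0.
      split; apply/rowP => i; have [? /eqP] := coordE i; rewrite ?mxE //.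
      by rewrite mulf_eq0 gt_eqF //= addr_eq0 => /eqP.
    pose coord (u : 'rV[R]_n) := u 0 i.
    have := congr1 coord qE; have := congr1 coord wE; have := congr1 coord q_fix.
    rewrite /coord !mxE; split; lra.
  by exists w, b; split; rewrite // -xw -ab.
move=> [z [b [Mzb Mzb' ->]]]; apply/T_PRP; exists z, z; split.
- by apply/resolvent_scaleP; exists b.
- by apply/resolvent_scaleP; exists (- b) => //; vec_eq.
- by vec_eq.
Qed.

Lemma Fix_T_PR_convex q0 q1 t : 0 <= t <= 1 ->
  Fix_op (T_PR s M1 M2) q0 -> Fix_op (T_PR s M1 M2) q1 ->
  Fix_op (T_PR s M1 M2) ((1 - t) *: q0 + t *: q1).
Proof.
move=> t01 /Fix_T_PRP[z0 [b0 [M2zb0 M1zb0 ->]]] /Fix_T_PRP[z1 [b1 [M2zb1 M1zb1 ->]]].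
(* the two monotonicity inequalities force [<z0 - z1, b0 - b1> = 0] *)
have cross2 : dotv (z0 - z1) (b0 - b1) <= 0.
  by rewrite -oppr_ge0 -dotvNr opprD; exact: hM1.1.
have cross1 : dotv (z0 - z1) (- b0 - - b1) <= 0.
  by rewrite -oppr_ge0 -dotvNr opprD !opprK; exact: hM2.1.
have M2t := maximal_monotone_segment hM2 t01 M2zb0 M2zb1 cross2.
have M1t := maximal_monotone_segment hM1 t01 M1zb0 M1zb1 cross1.
apply/Fix_T_PRP; exists ((1 - t) *: z0 + t *: z1), ((1 - t) *: b0 + t *: b1).
by split => //; [move: M1t; congr M1; vec_eq | vec_eq].
Qed.

Lemma Fix_T_PR_demiclosed {T} (F : set_system T) {FF : ProperFilter F}
    (a y z : T -> 'rV[R]_n) q c :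
  (\forall t \near F, resolvent (scale_op s M2) (a t) (y t) /\
     resolvent (scale_op s M1) (2%:R *: y t - a t) (z t)) ->
  a @ F --> q -> y @ F --> c -> z t - y t @[t --> F] --> (0 : 'rV[R]_n) ->
  Fix_op (T_PR s M1 M2) q.
Proof.
move=> Jayz aq yc zy0; have s0 : s != 0 by rewrite gt_eqF.
have zc : z @ F --> c.
  under [z]funext => t do rewrite -(subrK (y t) (z t)).
  by rewrite -[c]add0r; exact: cvgD.
pose b := s^-1 *: (q - c).
have M2cb : M2 c b.
  apply: (maximal_monotone_closed (g := fun t => s^-1 *: (a t - y t)) hM2 _ yc).
    by apply: filterS Jayz => t [Jy _]; exact: resolvent_scale_graph.
  by apply: cvgZ; [exact: cvg_cst | exact: cvgB].
have M1cb : M1 c (- b).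
  have -> : - b = s^-1 *: (2%:R *: c - q - c) by rewrite /b; vec_eq.
  apply: (maximal_monotone_closed (g := fun t => s^-1 *: (2%:R *: y t - a t - z t)) hM1 _ zc).
    by apply: filterS Jayz => t [_ Jz]; exact: resolvent_scale_graph.
  apply: cvgZ; first exact: cvg_cst.
  by apply: cvgB => //; apply: cvgB => //; apply: cvgZ => //; exact: cvg_cst.
apply/Fix_T_PRP; exists c, b; split => //.
by rewrite /b scalerA mulfV // scale1r addrC subrK.
Qed.

Lemma Fix_T_PR_zer q z : Fix_op (T_PR s M1 M2) q ->
  resolvent (scale_op s M2) q z -> zer (sum_op M1 M2) z.
Proof.
move=> /Fix_T_PRP[y [b [M2yb M1yb qE]]] Jz.
have <- : y = z.
  by apply: (resolvent_uniq hM2.1 (ltW s_gt0) _ Jz); apply/resolvent_scaleP; exists b.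
by exists (- b) => //; exists b => //; rewrite addNr.
Qed.

End PeacemanRachford.

Lemma compact_cluster_within {U : topologicalType} (K : set U) (h : nat -> U) (P : set nat) :
  compact K -> (forall k, K (h k)) -> ~ (\forall k \near \oo, ~ P k) ->
  exists (c : U) (G : set_system U), [/\ ProperFilter G, G --> c & h @ within P \oo `<=` G].
Proof.
move=> cK Kh nP.
have PF : ProperFilter (within P \oo).
  apply: Build_ProperFilter_ex => A PA; apply: contrapT => nA; apply: nP.
  by apply: filterS PA => k Ak; apply: nA; exists k.
have [c [_]] := cK _ (fmap_proper_filter h PF) (filterE _ Kh).
by rewrite cluster_cvgE => -[G PG [Gc hG]]; exists c, G.
Qed.

Lemma halpern_recursion_cvg0 (R : realType) (c : nat) (a d : nat -> R) :
  (forall k, 0 <= a k) -> (forall e, 0 < e -> \forall k \near \oo, d k <= e) ->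
  (forall k, a k.+1 <= (1 - (c + k).+1%:R^-1) * a k + (c + k).+1%:R^-1 * d k) ->
  a @ \oo --> 0.
Proof.
move=> a_ge0 d_small rec; apply/cvgrPdist_le => e e0.
have rec' k : (c + k).+1%:R * a k.+1 <= (c + k)%:R * a k + d k.
  have := ler_wpM2l (ler0n R (c + k).+1) (rec k).
  by rewrite mulrDr !mulrA mulrBr mulr1 divff ?pnatr_eq0 // mul1r -natr1 addrK.
have e20 : 0 < e / 2 by rewrite divr_gt0.
have [N _ dN] := d_small _ e20.
pose X := (c + N)%:R * a N.
have telescope m : (c + (N + m))%:R * a (N + m)%N <= X + m%:R * (e / 2).
  elim: m => [|m IHm]; first by rewrite !addn0 mul0r addr0.
  have := rec' (N + m)%N; have := dN (N + m)%N (leq_addr _ _).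
  rewrite addnS -addSn -[m.+1]addn1 natrD in IHm *; lra.
have [M _ hM] := nbhs_infty_ger (2 * X / e + 1).
exists (N + M)%N => // k /= NMk; rewrite sub0r normrN ger0_norm ?a_ge0 //.
have [m km] : exists m, k = (N + m)%N.
  by exists (k - N)%N; rewrite subnKC // (leq_trans (leq_addr M N)).
rewrite km leq_add2l in NMk *.
have := telescope m; have := hM m NMk.
move=> /(ler_wpM2r (ltW e0)); rewrite mulrDl divfK ?gt_eqF // mul1r => mX.
have mk : m%:R <= (c + (N + m))%:R :> R by rewrite ler_nat addnA leq_addl.
have := a_ge0 (N + m)%N; move: (a _) ((c + (N + m))%:R) mk => A K mk A0 tel.
rewrite leNgt; apply/negP => eA.
have := ler_wpM2l (ler0n R m) (ltW eA); have := ler_wpM2r A0 mk; lra.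
Qed.

Lemma compact_norm_le (R : realType) (n : nat) (r : R) :
  compact [set u : 'rV[R]_n | `|u| <= r].
Proof.
apply: bounded_closed_compact.
  exists r; split; first exact: num_real.
  by move=> M rM u /= ur; apply: le_trans ur (ltW rM).
apply: (@preimage_closed _ _ (Num.norm : 'rV[R]_n -> R) [set s | s <= r]).
  by move=> u _; exact: norm_continuous.
exact: closed_le.
Qed.

Section HalpernPeacemanRachford.
Variables (R : realType) (n : nat) (M1 M2 : setop R n).
Hypotheses (hM1 : maximal_monotone M1) (hM2 : maximal_monotone M2).
Variables (sigma : R) (w x v eta : nat -> 'rV[R]_n) (etastar : 'rV[R]_n).
Hypotheses (sigma_gt0 : 0 < sigma)
  (hw : forall k, resolvent (scale_op sigma M2) (eta k) (w k.+1))
  (hx : forall k, resolvent (scale_op sigma M1) (2%:R *: w k.+1 - eta k) (x k.+1))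
  (hv : forall k, v k.+1 = 2%:R *: x k.+1 - (2%:R *: w k.+1 - eta k))
  (heta : forall k, eta k.+1 =
     (k.+2%:R)^-1 *: eta 0%N + (k.+1%:R / k.+2%:R) *: v k.+1)
  (hetastar : is_proj (Fix_op (T_PR sigma M1 M2)) (eta 0%N) etastar).

Local Notation T := (T_PR sigma M1 M2).
Local Notation p := etastar.

Let lam k : R := k.+2%:R^-1.

Let lam_ge0 k : 0 <= lam k. Proof. by rewrite invr_ge0. Qed.

Let lam_le1 k : lam k <= 1. Proof. by rewrite invf_le1 // ler1n. Qed.

Let lam_cvg0 : lam @ \oo --> 0.
Proof. by have := @cvg_harmonic R; rewrite -cvg_shiftS. Qed.

Lemma T_PR_eta_v k : T (eta k) (v k.+1).
Proof. by apply/T_PRP; exists (w k.+1), (x k.+1). Qed.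

Lemma eta_halpern k : eta k.+1 = lam k *: eta 0%N + (1 - lam k) *: v k.+1.
Proof.
rewrite heta /lam; congr (_ + _ *: _).
rewrite -natr1; field.
by rewrite -natrD pnatr_eq0.
Qed.

Let D := dotv (eta 0%N - p) (eta 0%N - p).

Lemma dist_v_le_dist_eta k : dotv (v k.+1 - p) (v k.+1 - p) <= dotv (eta k - p) (eta k - p).
Proof. exact: (T_PR_nonexpansive sigma_gt0 hM1 hM2 (T_PR_eta_v k) hetastar.1). Qed.

Lemma dist_eta_le k : dotv (eta k - p) (eta k - p) <= D.
Proof.
elim: k => [|k IHk]; first by rewrite lexx.
have -> : eta k.+1 - p = lam k *: (eta 0%N - p) + (1 - lam k) *: (v k.+1 - p).
  by rewrite eta_halpern; vec_eq.
have lam1_ge0 : 0 <= 1 - lam k by rewrite subr_ge0.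
apply: le_trans (dotv_convex _ _ (lam_ge0 k) lam1_ge0 (subrKC _ _)) _.
have := ler_wpM2l lam1_ge0 (le_trans (dist_v_le_dist_eta k) IHk); rewrite -/D; lra.
Qed.

Lemma dist_eta0_v_le k : dotv (eta 0%N - v k.+1) (eta 0%N - v k.+1) <= 4 * D.
Proof.
have -> : eta 0%N - v k.+1 = (eta 0%N - p) + - (v k.+1 - p) by vec_eq.
apply: le_trans (dotv_sqD_le _ _) _; rewrite dotvNN.
have := le_trans (dist_v_le_dist_eta k) (dist_eta_le k); rewrite -/D; lra.
Qed.

Let a j := dotv (eta j.+2 - eta j.+1) (eta j.+2 - eta j.+1).

Let d j := 4 * D * lam j.+1 ^+ 2.

Let d_cvg0 : d @ \oo --> 0.
Proof.
have lam_S : lam j.+1 @[j --> \oo] --> 0 by rewrite cvg_shiftS; exact: lam_cvg0.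
have := cvgM (cvg_cst (4 * D)) (cvgM lam_S lam_S).
by rewrite !mulr0 => h; apply: h.
Qed.

Lemma eta_step_rec j : a j.+1 <= (1 - lam j.+2) * a j + lam j.+2 * d j.
Proof.
rewrite /a; set L := lam j.+2; set mu := lam j.+1.
(* uses [lam j.+2 - lam j.+1 = - L * mu] *)
have -> : eta j.+3 - eta j.+2 =
    (1 - L) *: (v j.+3 - v j.+2) + L *: (- mu *: (eta 0%N - v j.+2)).
  rewrite (eta_halpern j.+2) (eta_halpern j.+1) /L /mu /lam.
  apply/rowP => i; rewrite !mxE -!natr1; field.
  by rewrite !natr1 !pnatr_eq0.
have L_ge0 : 0 <= L := lam_ge0 _; have L1_ge0 : 0 <= 1 - L by rewrite subr_ge0 lam_le1.
apply: le_trans (dotv_convex _ _ L1_ge0 L_ge0 (subrK _ _)) _.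
apply: lerD; apply: ler_wpM2l => //.
  exact: (T_PR_nonexpansive sigma_gt0 hM1 hM2 (T_PR_eta_v j.+2) (T_PR_eta_v j.+1)).
rewrite dotvZl dotvZr mulrA mulrNN -expr2 mulrC /d.
by apply: ler_wpM2r; [exact: exprn_ge0 (lam_ge0 _) | exact: dist_eta0_v_le].
Qed.

Lemma eta_v_cvg0 : eta k - v k.+1 @[k --> \oo] --> (0 : 'rV[R]_n).
Proof.
have a_cvg0 : a @ \oo --> 0.
  apply: (@halpern_recursion_cvg0 _ 3 a d) => [j|e e0|j].
  - exact: dotv_ge0.
  - exact: (cvgr_le 0 d_cvg0 e e0).
  - exact: eta_step_rec.
rewrite -cvg_shiftS; apply: (cvg0_dotv_le (g := fun j => 2 * a j + 2 * d j)).
  apply: nearW => j /=.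
  have -> : eta j.+1 - v j.+2 = - (eta j.+2 - eta j.+1) + lam j.+1 *: (eta 0%N - v j.+2).
    by rewrite [in RHS](eta_halpern j.+1); vec_eq.
  apply: le_trans (dotv_sqD_le _ _) _; rewrite dotvNN dotvZl dotvZr -/(a j).
  rewrite lerD2l ler_pM2l // mulrA -expr2 mulrC /d.
  by apply: ler_wpM2r; [exact: exprn_ge0 (lam_ge0 _) | exact: dist_eta0_v_le].
have := cvgD (cvgM (cvg_cst (2 : R)) a_cvg0) (cvgM (cvg_cst (2 : R)) d_cvg0).
by rewrite mulr0 addr0 => h; apply: h.
Qed.

Lemma x_w_cvg0 : x k.+1 - w k.+1 @[k --> \oo] --> (0 : 'rV[R]_n).
Proof.
have xwE k : x k.+1 - w k.+1 = 2^-1 *: - (eta k - v k.+1).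
  by rewrite hv; apply/rowP => i; rewrite !mxE; field.
under eq_cvg do rewrite xwE.
have := cvgZ (cvg_cst (2^-1 : R)) (cvgN eta_v_cvg0).
by rewrite oppr0 scaler0 => h; apply: h.
Qed.

Lemma dist_eta_eta0_le k : dotv (eta k - eta 0%N) (eta k - eta 0%N) <= 4 * D.
Proof.
have -> : eta k - eta 0%N = (eta k - p) + - (eta 0%N - p) by vec_eq.
apply: le_trans (dotv_sqD_le _ _) _; rewrite dotvNN.
have := dist_eta_le k; rewrite -/D; lra.
Qed.

Lemma anchor_limsup e : 0 < e ->
  \forall k \near \oo, dotv (eta 0%N - p) (eta k - p) <= e.
Proof.
move=> e0; apply: contrapT => not_small.
(* otherwise a cluster point [q] of the [eta k] with [e < <eta 0 - p, eta k - p>]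
   is a fixed point lying beyond the projection [p] *)
pose h k := (eta k, (w k.+1, x k.+1)).
pose r := `|p| + `|w 1%N| + `|x 1%N| + (1 + 4 * D).
pose B := [set u : 'rV[R]_n | `|u| <= r].
have cB : compact (B `*` (B `*` B)).
  by apply: compact_setX; [|apply: compact_setX]; exact: compact_norm_le.
have h_in k : (B `*` (B `*` B)) (h k).
  have [w_le Rw_le] := resolvent_nonexpansive hM2.1 (ltW sigma_gt0) (hw k) (hw 0%N).
  have [x_le _] := resolvent_nonexpansive hM1.1 (ltW sigma_gt0) (hx k) (hx 0%N).
  have eta_le := dist_eta_eta0_le k; have D_ge0 : 0 <= D := dotv_ge0 _.
  have := normr_ge0 p; have := normr_ge0 (w 1%N); have := normr_ge0 (x 1%N).
  have := normr_le_dotvB (dist_eta_le k).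
  have := normr_le_dotvB (le_trans w_le eta_le).
  have := normr_le_dotvB (le_trans x_le (le_trans Rw_le eta_le)).
  rewrite /B /r /=; split; [|split]; lra.
have often : ~ (\forall k \near \oo, ~ (e < dotv (eta 0%N - p) (eta k - p))).
  by apply: contra_not not_small; apply: filterS => k /negP; rewrite -leNgt.
have [[q [c c']] [G [PG Gqc hG]]] := compact_cluster_within cB h_in often.
have fst_cvg : fst @ G --> q by apply: cvg_trans (cvg_app fst Gqc) _; exact: cvg_fst.
have q_fix : Fix_op T q.
  apply: (Fix_T_PR_demiclosed sigma_gt0 hM1 hM2 (F := G) (a := fst)
    (y := fun t => t.2.1) (z := fun t => t.2.2) (c := c)) => //.
  - by apply: hG; apply: nearW => k _; split; [exact: hw | exact: hx].
  - apply: cvg_trans (cvg_app (fun t => t.2.1) Gqc) _.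
    by apply: cvg_trans (cvg_app fst (@cvg_snd _ _ _ _ _)) _; exact: cvg_fst.
  - apply: cvg_trans (cvg_app (fun t => t.2.2 - t.2.1) hG) _.
    exact: (@cvg_within_filter _ _ (fun k => x k.+1 - w k.+1) _ _ _ _ x_w_cvg0).
have q_far : e <= dotv (eta 0%N - p) (q - p).
  have : dotv (eta 0%N - p) (t.1 - p) @[t --> G] --> dotv (eta 0%N - p) (q - p).
    by apply: cvg_dotv; [exact: cvg_cst | apply: cvgB => //; exact: cvg_cst].
  apply: (closed_cvg _ (@closed_ge R e)).
  by apply: hG; apply: nearW => k /ltW.
have Fix_convex q0 q1 t := @Fix_T_PR_convex _ _ _ _ _ sigma_gt0 hM1 hM2 q0 q1 t.
by have := is_proj_ineq Fix_convex hetastar q_fix; lra.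
Qed.

Lemma dist_eta_rec k : dotv (eta k.+1 - p) (eta k.+1 - p) <=
  (1 - lam k) * dotv (eta k - p) (eta k - p) +
  lam k * (2 * dotv (eta 0%N - p) (eta k.+1 - p)).
Proof.
have -> : eta k.+1 - p = lam k *: (eta 0%N - p) + (1 - lam k) *: (v k.+1 - p).
  by rewrite eta_halpern; vec_eq.
have Vb := dist_v_le_dist_eta k; rewrite dotv_anchorE !expr2.
set V := dotv (v k.+1 - p) _ in Vb *; set P := dotv (eta 0%N - p) (eta 0%N - p).
have L_ge0 := lam_ge0 k; have L1_ge0 : 0 <= 1 - lam k by rewrite subr_ge0 lam_le1.
have := mulr_ge0 (mulr_ge0 L_ge0 L1_ge0) (dotv_ge0 (v k.+1 - p)).
have := mulr_ge0 (mulr_ge0 L_ge0 L_ge0) (dotv_ge0 (eta 0%N - p)).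
have := ler_wpM2l L1_ge0 Vb; rewrite -/V -/P; lra.
Qed.

Lemma dist_eta_cvg0 : dotv (eta k - p) (eta k - p) @[k --> \oo] --> 0.
Proof.
apply: (@halpern_recursion_cvg0 _ 1 _ (fun k => 2 * dotv (eta 0%N - p) (eta k.+1 - p)))
  => [k|e e0|k]; [exact: dotv_ge0 | | exact: dist_eta_rec].
have [N _ hN] := anchor_limsup (divr_gt0 e0 (ltr0Sn R 1)).
by exists N => // k Nk /=; have := hN k.+1 (leqW Nk); rewrite /=; lra.
Qed.

Lemma eta_cvg : eta @ \oo --> p.
Proof. by apply/subr_cvg0; apply: cvg0_dotv_le dist_eta_cvg0; apply: nearW. Qed.

Lemma v_cvg : v k.+1 @[k --> \oo] --> p.
Proof.
have -> : (fun k => v k.+1) = eta - (fun k => eta k - v k.+1).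
  by apply/funext => k /=; rewrite subKr.
by have := cvgB eta_cvg eta_v_cvg0; rewrite subr0 => lim_v; apply: lim_v.
Qed.

Variables (wstar : 'rV[R]_n).
Hypothesis (hwstar : resolvent (scale_op sigma M2) p wstar).

Lemma w_cvg : w k.+1 @[k --> \oo] --> wstar.
Proof.
apply/subr_cvg0; apply: cvg0_dotv_le dist_eta_cvg0; apply: nearW => k.
exact: (resolvent_nonexpansive hM2.1 (ltW sigma_gt0) (hw k) hwstar).1.
Qed.

Lemma x_cvg : x k.+1 @[k --> \oo] --> wstar.
Proof.
have -> : (fun k => x k.+1) = (fun k => x k.+1 - w k.+1) + (fun k => w k.+1).
  by apply/funext => k /=; rewrite subrK.
by have := cvgD x_w_cvg0 w_cvg; rewrite add0r => lim_x; apply: lim_x.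
Qed.

End HalpernPeacemanRachford.

Theorem corollary3p2 (R : realType) (n : nat) (M1 M2 : setop R n)
  (hM1 : maximal_monotone M1) (hM2 : maximal_monotone M2)
  (hM12 : maximal_monotone (sum_op M1 M2))
  (hzer : zer (sum_op M1 M2) !=set0)
  (sigma : R) (hsigma : 0 < sigma)
  (w x v eta : nat -> 'rV[R]_n)
  (hw : forall k, resolvent (scale_op sigma M2) (eta k) (w k.+1))
  (hx : forall k, resolvent (scale_op sigma M1) (2%:R *: w k.+1 - eta k) (x k.+1))
  (hv : forall k, v k.+1 = 2%:R *: x k.+1 - (2%:R *: w k.+1 - eta k))
  (heta : forall k, eta k.+1 =
     (k.+2%:R)^-1 *: eta 0%N + (k.+1%:R / k.+2%:R) *: v k.+1)
  (etastar wstar : 'rV[R]_n)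
  (hetastar : is_proj (Fix_op (T_PR sigma M1 M2)) (eta 0%N) etastar)
  (hwstar : resolvent (scale_op sigma M2) etastar wstar) :
  eta k @[k --> \oo] --> etastar /\
  v k @[k --> \oo] --> etastar /\
  x k @[k --> \oo] --> wstar /\
  w k @[k --> \oo] --> wstar /\
  zer (sum_op M1 M2) wstar.
Proof.
split; first exact: (eta_cvg hM1 hM2 hsigma hw hx hv heta hetastar).
split; first by rewrite -cvg_shiftS; exact: (v_cvg hM1 hM2 hsigma hw hx hv heta hetastar).
split; first by rewrite -cvg_shiftS; exact: (x_cvg hM1 hM2 hsigma hw hx hv heta hetastar hwstar).
split; first by rewrite -cvg_shiftS; exact: (w_cvg hM1 hM2 hsigma hw hx hv heta hetastar hwstar).
exact: (Fix_T_PR_zer hsigma hM2 hetastar.1 hwstar).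
Qed.
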